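(* There exist absolute constants $K,\kappa>0$ such that the following holds. Let $\tilde c>0$ and $\tilde\xi\ge1$. Suppose that, for all $N$, all $m\ge1$, and all $m$-tuples $p,q$ of distinct integers in $[1,2N]$ with $|p-q|_1\ge N/8$, $$\mathbb E\Big[\prod_{a=1}^m|R_{p_a,q_a}|\Big]\le\tilde c^m\exp\big(-|p-q|_1/\tilde\xi\big).$$ Then multi-point dynamical localization holds with constants $C=K\tilde c\tilde\xi^2$ and $\xi=\kappa\tilde\xi$. That is, for all sufficiently large $N$, all $m\ge1$ and all strictly increasing $m$-tuples $p,q$ in $[1,2N]$ with $|p-q|_1\ge N/8$, $$\mathbb E|\det R[p,q]|\le C^me^{-N/\xi}.$$
   Context: $R=R(t)\in SO(2N)$ is a random orthogonal matrix, namely the Heisenberg evolution matrix of the Majorana operators at a fixed time $t$: $e^{iHt}c_pe^{-iHt}=\sum_qR_{p,q}c_q$ for a random quadratic Hamiltonian $H$. For $m$-tuples $p,q$, $|p-q|_1=\sum_{a=1}^m|p_a-q_a|$. For strictly increasing $p,q$, $R[p,q]$ is the $m\times m$ matrix with entries $R[p,q]_{a,b}=R_{p_a,q_b}$. $\mathbb E$ is the expectation over the randomness. *)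

From HB Require Import structures.
From Stdlib Require Import Reals Lra ClassicalEpsilon FunctionalExtensionality.
From mathcomp Require Import all_boot all_algebra.

Set Implicit Arguments.
Unset Strict Implicit.
Unset Printing Implicit Defensive.

Definition R_eqb (x y : R) : bool := if Req_EM_T x y then true else false.
Lemma R_eqP : Equality.axiom R_eqb.
Proof. move=> x y; rewrite /R_eqb; case: Req_EM_T => h; constructor => //. Qed.
HB.instance Definition _ := hasDecEq.Build R R_eqP.

Definition R_find (P : pred R) (_ : nat) : option R :=
  match excluded_middle_informative (exists x, P x) with
  | left h => Some (proj1_sig (constructive_indefinite_description _ h))
  | right _ => None
  end.
Lemma R_find_correct P n x : R_find P n = Some x -> P x.
Proof.
rewrite /R_find; case: excluded_middle_informative => // h [<-].
exact: proj2_sig (constructive_indefinite_description _ h).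
Qed.
Lemma R_find_complete (P : pred R) : (exists x, P x) -> exists n, R_find P n.
Proof. by move=> h; exists 0%N; rewrite /R_find; case: excluded_middle_informative. Qed.
Lemma R_find_ext (P Q : pred R) : P =1 Q -> R_find P =1 R_find Q.
Proof. by move=> h; have -> : P = Q by apply: functional_extensionality. Qed.
HB.instance Definition _ :=
  hasChoice.Build R R_find_correct R_find_complete R_find_ext.

Lemma R_addA : associative Rplus.
Proof. by move=> x y z; rewrite Rplus_assoc. Qed.
Lemma R_addC : commutative Rplus.
Proof. exact: Rplus_comm. Qed.
Lemma R_add0 : left_id R0 Rplus.
Proof. exact: Rplus_0_l. Qed.
Lemma R_addN : left_inverse R0 Ropp Rplus.
Proof. exact: Rplus_opp_l. Qed.
HB.instance Definition _ := GRing.isZmodule.Build R R_addA R_addC R_add0 R_addN.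

Lemma R_mulA : associative Rmult.
Proof. by move=> x y z; rewrite Rmult_assoc. Qed.
Lemma R_mulC : commutative Rmult.
Proof. exact: Rmult_comm. Qed.
Lemma R_mul1 : left_id R1 Rmult.
Proof. exact: Rmult_1_l. Qed.
Lemma R_mulDl : left_distributive Rmult Rplus.
Proof. exact: Rmult_plus_distr_r. Qed.
Lemma R1_neq0 : R1 != R0.
Proof. by apply/eqP; exact: R1_neq_R0. Qed.
HB.instance Definition _ := GRing.Zmodule_isComNzRing.Build R
  R_mulA R_mulC R_mul1 R_mulDl R1_neq0.

Local Open Scope ring_scope.
Definition is_SO (n : nat) (A : 'M[R]_n) : Prop :=
  A *m A^T = 1%:M /\ \det A = 1.
Local Close Scope ring_scope.

Local Open Scope R_scope.

(* The expectation is modelled abstractly as a normalized, positive, linear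
   functional, required to behave as such on bounded random variables
   (all random variables in the theorem are bounded, |R_{pq}| <= 1). *)
Definition bounded_rv (Omega : Type) (f : Omega -> R) : Prop :=
  exists B : R, forall w, Rabs (f w) <= B.

Record is_expectation (Omega : Type) (E : (Omega -> R) -> R) : Prop := {
  E_add : forall f g, bounded_rv f -> bounded_rv g ->
            E (fun w => f w + g w) = E f + E g;
  E_scale : forall (c : R) f, bounded_rv f -> E (fun w => c * f w) = c * E f;
  E_mono : forall f g, bounded_rv f -> bounded_rv g ->
            (forall w, f w <= g w) -> E f <= E g;
  E_one : E (fun _ => 1) = 1
}.


(* Indices {1,...,2N} are represented 0-based as 'I_(N.*2); this shift does
   not affect |p-q|_1, monotonicity or distinctness. *)

Definition dist1 (n m : nat) (p q : m.-tuple 'I_n) : R :=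
  \big[Rplus/0]_(a < m) Rabs (INR (tnth p a) - INR (tnth q a)).

Definition strictly_increasing (n m : nat) (p : m.-tuple 'I_n) : bool :=
  sorted ltn (map (@nat_of_ord n) p).

Definition subm (n m : nat) (A : 'M[R]_n) (p q : m.-tuple 'I_n) : 'M[R]_m :=
  \matrix_(a < m, b < m) A (tnth p a) (tnth q b).

Definition prod_abs_entries (n m : nat) (A : 'M[R]_n) (p q : m.-tuple 'I_n) : R :=
  \big[Rmult/1]_(a < m) Rabs (A (tnth p a) (tnth q a)).

(* Expanding the determinant over permutations,
     |det R[p,q]| <= sum_s prod_a |R_{p_a, q_{s(a)}}|,
   and each summand is a product of entries along the permuted tuple q o s.
   Since p and q are increasing, the rearrangement inequality gives
   |p - q o s|_1 >= |p - q|_1 >= N/8, so the hypothesis applies to every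
   summand.  Writing exp(-D/xi~) = exp(-D/(2 xi~))^2, one factor is at most
   exp(-N/(16 xi~)) and the other factorises as prod_a exp(-|p_a-q_{s(a)}|/(2 xi~)).
   Summing over s is bounded by the product of the row sums, and each row sum
   is a two-sided geometric series bounded by 2(2 xi~ + 1) <= 6 xi~^2.  Hence
     E|det R[p,q]| <= (6 c~ xi~^2)^m exp(-N/(16 xi~)),
   i.e. the theorem holds with K = 6, kappa = 16 (and every N). *)

From HB Require Import structures.
From Stdlib Require Import Reals Lra FunctionalExtensionality.
From mathcomp Require Import all_boot all_algebra all_fingroup zify.
Open Scope R_scope.
Set Implicit Arguments. Unset Strict Implicit.

Lemma Rplus_assoc' : associative Rplus.
Proof. by move=> x y z; rewrite Rplus_assoc. Qed.
Lemma Rmult_assoc' : associative Rmult.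
Proof. by move=> x y z; rewrite Rmult_assoc. Qed.
HB.instance Definition _ :=
  Monoid.isComLaw.Build R 0 Rplus Rplus_assoc' Rplus_comm Rplus_0_l.
HB.instance Definition _ :=
  Monoid.isComLaw.Build R 1 Rmult Rmult_assoc' Rmult_comm Rmult_1_l.
HB.instance Definition _ := Monoid.isMulLaw.Build R 0 Rmult Rmult_0_l Rmult_0_r.
HB.instance Definition _ :=
  Monoid.isAddLaw.Build R Rmult Rplus Rmult_plus_distr_r Rmult_plus_distr_l.

Section RealBigops.
Variable I : Type.
Implicit Types (r : seq I) (P : pred I) (F G : I -> R).

Lemma sumR_le r P F G : (forall i, P i -> F i <= G i) ->
  \big[Rplus/0]_(i <- r | P i) F i <= \big[Rplus/0]_(i <- r | P i) G i.
Proof. by move=> FG; apply: (big_ind2 (fun x y => x <= y)) => *; lra || auto. Qed.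

Lemma sumR_ge0 r P F : (forall i, P i -> 0 <= F i) ->
  0 <= \big[Rplus/0]_(i <- r | P i) F i.
Proof. by move=> F0; apply: (big_ind (fun x => 0 <= x)) => *; lra || auto. Qed.

Lemma prodR_ge0 r P F : (forall i, P i -> 0 <= F i) ->
  0 <= \big[Rmult/1]_(i <- r | P i) F i.
Proof. by move=> F0; apply: (big_ind (fun x => 0 <= x)) => *; nra || auto. Qed.

Lemma prodR_le r P F G : (forall i, P i -> 0 <= F i <= G i) ->
  \big[Rmult/1]_(i <- r | P i) F i <= \big[Rmult/1]_(i <- r | P i) G i.
Proof.
move=> FG.
suff [] : 0 <= \big[Rmult/1]_(i <- r | P i) F i <= \big[Rmult/1]_(i <- r | P i) G i
  by [].
apply: (big_ind2 (fun x y => 0 <= x <= y)) => //; first lra.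
by move=> x1 x2 y1 y2 [? ?] [? ?]; split; [nra | apply: Rmult_le_compat].
Qed.

Lemma Rabs_sumR r P F :
  Rabs (\big[Rplus/0]_(i <- r | P i) F i)
    <= \big[Rplus/0]_(i <- r | P i) Rabs (F i).
Proof.
apply: (big_ind2 (fun x y => Rabs x <= y)); first by rewrite Rabs_R0; lra.
- by move=> x1 x2 y1 y2 h1 h2; apply: Rle_trans (Rabs_triang _ _) _; lra.
- by move=> *; lra.
Qed.

Lemma Rabs_prodR r P F :
  Rabs (\big[Rmult/1]_(i <- r | P i) F i) = \big[Rmult/1]_(i <- r | P i) Rabs (F i).
Proof. by apply: big_morph; [exact: Rabs_mult | exact: Rabs_R1]. Qed.

End RealBigops.

Lemma sumR_uniq_le (T : finType) (s : seq T) (F : T -> R) :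
  uniq s -> (forall x, 0 <= F x) ->
  \big[Rplus/0]_(x <- s) F x <= \big[Rplus/0]_(x : T) F x.
Proof.
move=> us F0; rewrite (big_uniq _ us) [X in _ <= X](bigID (fun x => x \in s)) /=.
have := @sumR_ge0 T (index_enum T) (fun x => true && (x \notin s)) F (fun i _ => F0 i).
set outside := \big[Rplus/0]_(i <- _ | _) _; set inside := \big[Rplus/0]_(i <- _ | _) _.
lra.
Qed.

Lemma prodR_const m (c : R) : \big[Rmult/1]_(a < m) c = c ^ m.
Proof. by elim: m => [|m IH]; rewrite ?big_ord0 // big_ord_recr IH /=; ring. Qed.

Section ExpectationOfSums.
Variables (Omega : Type) (E : (Omega -> R) -> R).
Hypothesis hE : is_expectation E.

Lemma bounded_sum (I : Type) (r : seq I) (F : I -> Omega -> R) :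
  (forall i, bounded_rv (F i)) -> bounded_rv (fun w => \big[Rplus/0]_(i <- r) F i w).
Proof.
move=> Fb; elim: r => [|i r [B hB]].
  by exists 0 => w; rewrite big_nil Rabs_R0; lra.
have [Bi hBi] := Fb i; exists (Bi + B) => w; rewrite big_cons.
by apply: Rle_trans (Rabs_triang _ _) _; have := hBi w; have := hB w; lra.
Qed.

Lemma E_zero : E (fun _ => 0) = 0.
Proof.
have one_bd : bounded_rv (fun _ : Omega => 1) by exists 1 => w; rewrite Rabs_R1; lra.
by have := E_scale hE 0 one_bd; rewrite !Rmult_0_l.
Qed.

Lemma E_sum (I : Type) (r : seq I) (F : I -> Omega -> R) :
  (forall i, bounded_rv (F i)) ->
  E (fun w => \big[Rplus/0]_(i <- r) F i w) = \big[Rplus/0]_(i <- r) E (F i).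
Proof.
move=> Fb; elim: r => [|i r IH].
  rewrite big_nil -[RHS]E_zero; congr E; apply: functional_extensionality => w.
  by rewrite big_nil.
rewrite big_cons -IH -(E_add hE (Fb i) (bounded_sum r Fb)); congr E.
by apply: functional_extensionality => w; rewrite big_cons.
Qed.

Lemma E_le_sum (I : Type) (r : seq I) (f : Omega -> R) (F : I -> Omega -> R) :
  (forall i, bounded_rv (F i)) ->
  (forall w, 0 <= f w <= \big[Rplus/0]_(i <- r) F i w) ->
  E f <= \big[Rplus/0]_(i <- r) E (F i).
Proof.
move=> Fb fF; rewrite -E_sum //; have [B hB] := bounded_sum r Fb.
apply: (E_mono hE) => [||w]; last by case: (fF w).
- exists B => w; have [f0 fS] := fF w; rewrite Rabs_right; last lra.
  by apply: Rle_trans fS (Rle_trans _ _ _ (Rle_abs _) (hB w)).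
- exact: bounded_sum.
Qed.

End ExpectationOfSums.

Fixpoint seq_dist (s t : seq nat) : R :=
  match s, t with
  | x :: s', y :: t' => Rabs (INR x - INR y) + seq_dist s' t'
  | _, _ => 0
  end.

Lemma seq_dist_cat s1 s2 t1 t2 : size s1 = size t1 ->
  seq_dist (s1 ++ s2) (t1 ++ t2) = seq_dist s1 t1 + seq_dist s2 t2.
Proof.
elim: s1 t1 => [|x s1 IH] [|y t1] //= => [_|[h]]; first lra.
by rewrite IH //; lra.
Qed.

Lemma uncross_le (a b c d : R) : a <= b -> c <= d ->
  Rabs (a - c) + Rabs (b - d) <= Rabs (a - d) + Rabs (b - c).
Proof. by move=> ab cd; rewrite /Rabs; repeat case: Rcase_abs; lra. Qed.

Lemma perm_exchange (y c : nat) r1 r2 :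
  perm_eq (y :: r1 ++ c :: r2) (c :: r1 ++ y :: r2).
Proof. by apply/seq.permP => P /=; rewrite !count_cat /=; lia. Qed.

Lemma split_at_size (T : Type) (s : seq T) (k : nat) : (k < size s)%N ->
  exists s1 b s2, s = s1 ++ b :: s2 /\ size s1 = k.
Proof.
move=> ks; exists (take k s); case ed: (drop k s) => [|b s2].
  by have := size_drop k s; rewrite ed /= => h; exfalso; lia.
by exists b, s2; rewrite -ed cat_take_drop size_take ks.
Qed.

Lemma sorted_seq_dist_min (p q r : seq nat) :
  sorted leq p -> sorted leq q -> perm_eq q r -> size p = size q ->
  seq_dist p q <= seq_dist p r.
Proof.
elim: p q r => [|a p' IH] [|c q'] [|y r'] //= sp sq qr;
  try by move=> *; lra.
  by move/perm_size: qr.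
case=> hs; have [sp' sq'] := (path_sorted sp, path_sorted sq).
have [eyc | nyc] := eqVneq y c.
  by subst y; rewrite perm_cons in qr; have := IH _ _ sp' sq' qr hs; lra.
have cr' : c \in r'.
  have : c \in y :: r' by rewrite -(perm_mem qr) mem_head.
  by rewrite in_cons eq_sym (negPf nyc).
have yq' : y \in q'.
  have : y \in c :: q' by rewrite (perm_mem qr) mem_head.
  by rewrite in_cons (negPf nyc).
have le_cy : (c <= y)%N by apply: (allP (order_path_min leq_trans sq)).
case/splitPr: cr' qr => r1 r2 qr.
have [|p1 [b [p2 [ep hp1]]]] := @split_at_size _ p' (size r1).
  by have := perm_size qr; rewrite hs /= size_cat /=; lia.
have le_ab : (a <= b)%N.
  by apply: (allP (order_path_min leq_trans sp)); rewrite ep mem_cat mem_head orbT.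
have qr' : perm_eq q' (r1 ++ y :: r2).
  by rewrite -(perm_cons c); apply: perm_trans qr (perm_exchange _ _ _ _).
have := IH _ _ sp' sq' qr' hs; rewrite ep /= !seq_dist_cat //=.
have := uncross_le (le_INR _ _ (elimT ssrnat.leP le_ab)) (le_INR _ _ (elimT ssrnat.leP le_cy)).
lra.
Qed.

Lemma seq_dist_nth (s t : seq nat) : size s = size t ->
  \big[Rplus/0]_(a < size s) Rabs (INR (nth 0%N s a) - INR (nth 0%N t a))
    = seq_dist s t.
Proof.
elim: s t => [|x s IH] [|y t] //= => [_|[st]]; first by rewrite big_ord0.
by rewrite big_ord_recl /= -IH.
Qed.

Lemma dist1_seq_dist n m (p q : m.-tuple 'I_n) :
  dist1 p q = seq_dist (map val p) (map val q).
Proof.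
rewrite -seq_dist_nth ?size_map ?size_tuple //; apply: eq_bigr => a _.
by rewrite (nth_map (tnth p a)) ?(nth_map (tnth q a)) ?size_tuple // -!tnth_nth.
Qed.

Definition permute_tuple n m (q : m.-tuple 'I_n) (s : 'S_m) : m.-tuple 'I_n :=
  [tuple tnth q (s a) | a < m].

Lemma permute_tuple_perm_eq n m (q : m.-tuple 'I_n) s : perm_eq (permute_tuple q s) q.
Proof. by apply/tuple_permP; exists s. Qed.

Lemma strictly_increasing_uniq n m (p : m.-tuple 'I_n) :
  strictly_increasing p -> uniq p.
Proof. by move/(sorted_uniq ltn_trans ltnn); rewrite map_inj_uniq //; exact: val_inj. Qed.

Lemma dist1_permute_tuple n m (p q : m.-tuple 'I_n) s :
  strictly_increasing p -> strictly_increasing q -> dist1 p q <= dist1 p (permute_tuple q s).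
Proof.
move=> sp sq; rewrite !dist1_seq_dist; apply: sorted_seq_dist_min.
- by apply: sub_sorted sp => x y; exact: ltnW.
- by apply: sub_sorted sq => x y; exact: ltnW.
- by apply: perm_map; rewrite perm_sym permute_tuple_perm_eq.
- by rewrite !size_map !size_tuple.
Qed.

Lemma orthonormal_entry_le1 n (A : 'M[R]_n) i j :
  (A *m A^T = 1%:M)%R -> Rabs (A i j) <= 1.
Proof.
move=> AAt; have := congr1 (fun M : 'M[R]_n => M i i) AAt; rewrite !mxE eqxx /=.
under eq_bigr do rewrite mxE.
change (\big[Rplus/0]_k (A i k * A i k) = 1 -> Rabs (A i j) <= 1).
rewrite (bigD1 j) //= => row_norm.
have rest0 : 0 <= \big[Rplus/0]_(k | k != j) (A i k * A i k).
  by apply: sumR_ge0 => k _; nra.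
change (A i j * A i j + \big[Rplus/0]_(k | k != j) (A i k * A i k) = 1) in row_norm.
have sq_le1 : A i j * A i j <= 1 by lra.
by rewrite /Rabs; case: Rcase_abs => _; nra.
Qed.

Lemma prod_abs_entries_le1 n m (A : 'M[R]_n) (p q : m.-tuple 'I_n) :
  (A *m A^T = 1%:M)%R -> 0 <= prod_abs_entries A p q <= 1.
Proof.
move=> AAt; split; first by apply: prodR_ge0 => a _; apply: Rabs_pos.
suff [] : 0 <= prod_abs_entries A p q <= 1 by [].
apply: (big_ind (fun x => 0 <= x <= 1)); first lra.
- by move=> x y [? ?] [? ?]; split; nra.
- by move=> a _; split; [apply: Rabs_pos | exact: orthonormal_entry_le1].
Qed.

Lemma det_abs_le m (M : 'M[R]_m) :
  Rabs (\det M)%R <= \big[Rplus/0]_(s : 'S_m) \big[Rmult/1]_(a < m) Rabs (M a (s a)).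
Proof.
apply: Rle_trans (Rabs_sumR _ _ _) _; apply: sumR_le => s _.
change (Rabs (((-1) ^+ s)%R * \big[Rmult/1]_a M a (s a))
          <= \big[Rmult/1]_(a < m) Rabs (M a (s a))).
have sign1 : Rabs ((-1) ^+ s)%R = 1.
  case: (odd_perm s); rewrite /= ?expr1 ?expr0 ?Rabs_R1 //.
  by rewrite -[X in Rabs X]/(- 1) Rabs_Ropp Rabs_R1.
by rewrite Rabs_mult Rabs_prodR sign1 Rmult_1_l; exact: Rle_refl.
Qed.

Lemma det_subm_le n m (A : 'M[R]_n) (p q : m.-tuple 'I_n) :
  Rabs (\det (subm A p q))%R
    <= \big[Rplus/0]_(s : 'S_m) prod_abs_entries A p (permute_tuple q s).
Proof.
apply: Rle_trans (det_abs_le _) _; apply: Req_le; apply: eq_bigr => s _.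
by apply: eq_bigr => a _; rewrite mxE tnth_mktuple.
Qed.

(* For a nonnegative kernel F, summing prod_a F(a, s(a)) over permutations s
   is bounded by the product of the row sums (which sums over all maps). *)
Lemma sum_perm_le_prod_rowsum m (F : 'I_m -> 'I_m -> R) : (forall a b, 0 <= F a b) ->
  \big[Rplus/0]_(s : 'S_m) \big[Rmult/1]_(a < m) F a (s a)
    <= \big[Rmult/1]_(a < m) \big[Rplus/0]_(b < m) F a b.
Proof.
move=> F0; rewrite bigA_distr_bigA /=.
set graph := fun s : 'S_m => [ffun a => s a].
have -> : \big[Rplus/0]_(s : 'S_m) \big[Rmult/1]_(a < m) F a (s a)
   = \big[Rplus/0]_(f <- map graph (index_enum _)) \big[Rmult/1]_(a < m) F a (f a).
  by rewrite big_map; apply: eq_bigr => s _; apply: eq_bigr => a _; rewrite ffunE.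
apply: sumR_uniq_le => [|f]; last exact: prodR_ge0.
rewrite map_inj_uniq ?index_enum_uniq // => s1 s2 eq12.
by apply/permP => a; have := congr1 (fun f : {ffun 'I_m -> 'I_m} => f a) eq12; rewrite !ffunE.
Qed.

Definition decay (c : R) (x y : nat) : R := exp (- Rabs (INR x - INR y) / c).

Lemma decay_ge0 c x y : 0 <= decay c x y.
Proof. exact/Rlt_le/exp_pos. Qed.

Lemma exp_dist1_prod n m (c : R) (p q : m.-tuple 'I_n) :
  exp (- dist1 p q / c) = \big[Rmult/1]_(a < m) decay c (tnth p a) (tnth q a).
Proof.
rewrite /dist1 (big_morph (fun x => exp (- x / c)) (id1 := 1) (op1 := Rmult)) //.
- by move=> x y; rewrite -exp_plus; congr exp; rewrite /Rdiv; ring.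
- by rewrite /Rdiv Ropp_0 Rmult_0_l exp_0.
Qed.

Lemma Rabs_INR_sub (x k : nat) : Rabs (INR x - INR k) = INR ((x - k) + (k - x))%N.
Proof.
have [kx | xk] := leqP k x.
- have -> : (k - x = 0)%N by lia.
  rewrite addn0 minus_INR; last exact/ssrnat.leP.
  by rewrite Rabs_right //; have := le_INR k x (elimT ssrnat.leP kx); lra.
- have -> : (x - k = 0)%N by lia.
  rewrite add0n minus_INR; last exact/ssrnat.leP/ltnW.
  by rewrite Rabs_left1 //; have := le_INR x k (elimT ssrnat.leP (ltnW xk)); lra.
Qed.

Lemma exp_INR_mul (d : nat) (a : R) : exp (INR d * a) = exp a ^ d.
Proof.
elim: d => [|d IH]; first by rewrite /= Rmult_0_l exp_0.
by rewrite S_INR Rmult_plus_distr_r Rmult_1_l exp_plus IH /=; ring.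
Qed.

(* Telescoping invariant for the two-sided geometric sum sum_{k<n} r^|x-k|:
   the terms left of x telescope to r^(x+1-n) (or 1), those right of x
   contribute 1 - r^(n-x). *)
Lemma two_sided_geometric (x n : nat) (r : R) : 0 <= r <= 1 ->
  (\big[Rplus/0]_(k < n) r ^ ((x - k) + (k - x))) * (1 - r)
    <= r ^ (x.+1 - n) + 1 - r ^ (n - x).
Proof.
move=> r01; elim: n => [|n IH].
  by rewrite big_ord0 /=; have := pow_le r x (proj1 r01); nra.
rewrite big_ord_recr /=; set S := \big[Rplus/0]_(i < n) _ in IH *.
have [nx | xn | eq_nx] := ltngtP n x.
- have -> : (x - n + (n - x) = x - n)%N by lia.
  have -> : (x.+1 - n.+1 = x - n)%N by lia.
  have -> : (n.+1 - x = 0)%N by lia.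
  have e : (x.+1 - n = (x - n).+1)%N by lia.
  have e' : (n - x = 0)%N by lia.
  by rewrite e e' /= in IH; lra.
- have -> : (x - n + (n - x) = n - x)%N by lia.
  have -> : (x.+1 - n.+1 = 0)%N by lia.
  have -> : (n.+1 - x = (n - x).+1)%N by lia.
  have e : (x.+1 - n = 0)%N by lia.
  by rewrite e /= in IH *; set t := r ^ (n - x) in IH *; nra.
- subst x; have -> : (n - n + (n - n) = 0)%N by lia.
  have e : (n.+1 - n = 1)%N by lia.
  by rewrite e subnn /= in IH; rewrite subnn e /=; nra.
Qed.

Lemma decay_rowsum (c : R) (x n : nat) : 0 < c ->
  \big[Rplus/0]_(k < n) decay c x k <= 2 * (c + 1).
Proof.
move=> c0; set r := exp (- / c).
have as_pow k : decay c x k = r ^ ((x - k) + (k - x)).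
  by rewrite /decay Rabs_INR_sub -exp_INR_mul; congr exp; rewrite /Rdiv; ring.
under eq_bigr do rewrite as_pow.
have r0 : 0 < r by apply: exp_pos.
have r_inv : r * exp (/ c) = 1 by rewrite /r -exp_plus Rplus_opp_l exp_0.
have ic0 : 0 < / c by apply: Rinv_0_lt_compat.
have exp_lb : 1 + / c < exp (/ c) by apply: exp_ineq1; lra.
have ic : c * / c = 1 by field; lra.
have r1 : r <= 1 by nra.
have gap : 1 <= (1 - r) * (c + 1) by nra.
have := two_sided_geometric x n (conj (Rlt_le _ _ r0) r1).
set S := \big[Rplus/0]_(k < n) _.
have S0 : 0 <= S by apply: sumR_ge0 => k _; apply: pow_le; lra.
have := pow_le r (n - x) (Rlt_le _ _ r0).
have : r ^ (x.+1 - n) <= 1 by rewrite -(pow1 (x.+1 - n)); apply: pow_incr; lra.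
nra.
Qed.

Lemma decay_rowsum_tuple n m (c : R) (x : nat) (q : m.-tuple 'I_n) :
  uniq q -> 0 < c -> \big[Rplus/0]_(b < m) decay c x (tnth q b) <= 2 * (c + 1).
Proof.
move=> uq c0; rewrite -(big_tuple _ _ q predT (fun k : 'I_n => decay c x k)).
apply: Rle_trans (decay_rowsum x n c0).
by apply: sumR_uniq_le uq _ => k; exact: decay_ge0.
Qed.

Lemma sum_perm_decay_le n m (c : R) (p q : m.-tuple 'I_n) : uniq q -> 0 < c ->
  \big[Rplus/0]_(s : 'S_m) \big[Rmult/1]_(a < m) decay c (tnth p a) (tnth q (s a))
    <= (2 * (c + 1)) ^ m.
Proof.
move=> uq c0.
have F0 a b : 0 <= decay c (tnth p a) (tnth q b) by exact: decay_ge0.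
apply: Rle_trans (sum_perm_le_prod_rowsum F0) _.
rewrite -prodR_const; apply: prodR_le => a _; split.
  by apply: sumR_ge0 => b _; exact: decay_ge0.
exact: decay_rowsum_tuple.
Qed.

Lemma exp_decay_split (L D xi : R) : 0 < xi -> L <= D ->
  exp (- D / xi) <= exp (- L / (2 * xi)) * exp (- D / (2 * xi)).
Proof.
move=> xi0 LD; rewrite -exp_plus.
have rate : - D / xi <= - L / (2 * xi) + - D / (2 * xi).
  have -> : - D / xi = - D / (2 * xi) + - D / (2 * xi) by field; lra.
  apply: Rplus_le_compat_r; rewrite /Rdiv; apply: Rmult_le_compat_r; last lra.
  by apply/Rlt_le/Rinv_0_lt_compat; lra.
by case: rate => [lt | ->]; [exact/Rlt_le/exp_increasing | exact: Rle_refl].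
Qed.

Section MinorBound.
Variables (Omega : Type) (E : (Omega -> R) -> R) (N m : nat).
Variables (Rm : Omega -> 'M[R]_(N.*2)) (ct xit : R) (p q : m.-tuple 'I_(N.*2)).
Hypothesis hE : is_expectation E.
Hypothesis orth : forall w, (Rm w *m (Rm w)^T = 1%:M)%R.
Hypotheses (ct0 : 0 < ct) (xit1 : 1 <= xit).
Hypotheses (sp : strictly_increasing p) (sq : strictly_increasing q).
Hypothesis far : INR N / 8 <= dist1 p q.
Hypothesis single_entry : forall q' : m.-tuple 'I_(N.*2),
  uniq p -> uniq q' -> INR N / 8 <= dist1 p q' ->
  E (fun w => prod_abs_entries (Rm w) p q') <= ct ^ m * exp (- dist1 p q' / xit).

Local Notation term s := (fun w => prod_abs_entries (Rm w) p (permute_tuple q s)).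

Lemma expected_det_le_sum :
  E (fun w => Rabs (\det (subm (Rm w) p q))%R)
    <= \big[Rplus/0]_(s : 'S_m) E (term s).
Proof.
apply: E_le_sum => // [s | w]; last by split; [apply: Rabs_pos | exact: det_subm_le].
exists 1 => w; have [t0 t1] := prod_abs_entries_le1 p (permute_tuple q s) (orth w).
by rewrite Rabs_right; lra.
Qed.

(* Every reordering of q is still far from p, so the hypothesis applies;
   half of its decay gives exp(-N/(16 xi~)), the other half factorises. *)
Lemma expected_term_le (s : 'S_m) :
  E (term s) <= ct ^ m * exp (- INR N / (16 * xit))
                 * \big[Rmult/1]_(a < m) decay (2 * xit) (tnth p a) (tnth q (s a)).
Proof.
have far_s : INR N / 8 <= dist1 p (permute_tuple q s).
  exact: Rle_trans far (dist1_permute_tuple s sp sq).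
have uq_s : uniq (permute_tuple q s).
  by rewrite (perm_uniq (permute_tuple_perm_eq q s)) strictly_increasing_uniq.
apply: Rle_trans (single_entry (strictly_increasing_uniq sp) uq_s far_s) _.
rewrite Rmult_assoc; apply: Rmult_le_compat_l; first by apply: pow_le; lra.
have -> : - INR N / (16 * xit) = - (INR N / 8) / (2 * xit) by field; lra.
apply: Rle_trans (exp_decay_split _ far_s) _; first lra.
apply: Req_le; congr Rmult; rewrite exp_dist1_prod.
by apply: eq_bigr => a _; rewrite tnth_mktuple.
Qed.

Lemma expected_minor_bound :
  E (fun w => Rabs (\det (subm (Rm w) p q))%R)
    <= (6 * ct * xit ^ 2) ^ m * exp (- INR N / (16 * xit)).
Proof.
apply: Rle_trans expected_det_le_sum _.
apply: Rle_trans; first by apply: sumR_le => s _; exact: expected_term_le.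
rewrite -big_distrr /=.
have scale0 : 0 < 2 * xit by lra.
have perm_sum := sum_perm_decay_le p (strictly_increasing_uniq sq) scale0.
have row_le : (2 * (2 * xit + 1)) ^ m <= (6 * xit ^ 2) ^ m.
  by apply: pow_incr; split; nra.
have prefactor0 : 0 <= ct ^ m * exp (- INR N / (16 * xit)).
  by apply: Rmult_le_pos; [apply: pow_le; lra | exact/Rlt_le/exp_pos].
apply: Rle_trans (Rmult_le_compat_l _ _ _ prefactor0 (Rle_trans _ _ _ perm_sum row_le)) _.
by apply: Req_le; rewrite !Rpow_mult_distr; ring.
Qed.

End MinorBound.

Theorem mainTheorem11 :
  exists K kappa : R, 0 < K /\ 0 < kappa /\
  forall (Omega : Type) (E : (Omega -> R) -> R), is_expectation E ->
  forall (Rm : forall N : nat, Omega -> 'M[R]_(N.*2)),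
  (forall N w, is_SO (Rm N w)) ->
  forall ct xit : R, 0 < ct -> 1 <= xit ->
  (forall (N m : nat), (1 <= m)%N ->
     forall p q : m.-tuple 'I_(N.*2), uniq p -> uniq q ->
     INR N / 8 <= dist1 p q ->
     E (fun w => prod_abs_entries (Rm N w) p q)
       <= pow ct m * exp (- dist1 p q / xit)) ->
  let C := K * ct * xit ^ 2 in
  let xi := kappa * xit in
  exists N0 : nat, forall N : nat, (N0 <= N)%N ->
  forall m : nat, (1 <= m)%N ->
  forall p q : m.-tuple 'I_(N.*2),
     strictly_increasing p -> strictly_increasing q ->
     INR N / 8 <= dist1 p q ->
     E (fun w => Rabs (determinant (subm (Rm N w) p q)))
       <= pow C m * exp (- INR N / xi).
Proof.
exists 6, 16; split; first lra; split; first lra.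
move=> Omega E hE Rm hSO ct xit ct0 xit1 single_entry C xi.
exists 0%N => N _ m m1 p q sp sq far.
apply: expected_minor_bound => // [w | q']; first by case: (hSO N w).
exact: single_entry.
Qed.
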